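(* Let $k,d>0$, $b,\tilde b\ge0$ be constants and $\eta_1,\eta_2,c_1,c_2,\tilde c_1,\tilde c_2\ge0$, with $c_1^{tot}:=\eta_1+c_1>0$, $c_2^{tot}:=\eta_2+c_2$, $\tilde c_2>0$, and $b/k+\tilde b/d<1$. Consider $$\frac{dN_1}{dt}=-\big(k+c_1^{tot}N_1+c_2^{tot}N_2\big)N_1+bN_1+\tilde bN_2,\qquad \frac{dN_2}{dt}=-\big(d+\tilde c_1N_1+\tilde c_2N_2\big)N_2+\big(k+\eta_1N_1+\eta_2N_2\big)N_1,$$ with nonnegative initial data. Then, for $\tilde b$ small enough (relative to the other parameters), $(0,0)$ is the unique steady state in $\mathbb{R}_+^2$ and it is stable; moreover every trajectory converges to $(0,0)$. *)

From Stdlib Require Import Reals.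
Open Scope R_scope.

Definition F1 (k b bt eta1 eta2 c1 c2 : R) (N1 N2 : R) : R :=
  - (k + (eta1 + c1) * N1 + (eta2 + c2) * N2) * N1 + b * N1 + bt * N2.

Definition F2 (k d eta1 eta2 ct1 ct2 : R) (N1 N2 : R) : R :=
  - (d + ct1 * N1 + ct2 * N2) * N2 + (k + eta1 * N1 + eta2 * N2) * N1.

Definition is_solution (k d b bt eta1 eta2 c1 c2 ct1 ct2 : R)
    (N1 N2 : R -> R) : Prop :=
  (forall eps, 0 < eps -> exists delta, 0 < delta /\
      forall t, 0 <= t < delta ->
        Rabs (N1 t - N1 0) < eps /\ Rabs (N2 t - N2 0) < eps) /\
  (forall t, 0 < t ->
      derivable_pt_lim N1 t (F1 k b bt eta1 eta2 c1 c2 (N1 t) (N2 t)) /\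
      derivable_pt_lim N2 t (F2 k d eta1 eta2 ct1 ct2 (N1 t) (N2 t))).

From Stdlib Require Import Reals Lra Psatz.
Open Scope R_scope.

(* V = N1 + al N2 is a Lyapunov function on the closed positive quadrant.  With
   p = b/k and q = bt/d, the weight al = (1 - p + q)/2 lies in (0, 1] and makes
   the linear part of dV/dt at most -g V for some g > 0, precisely because
   p + q < 1; as al <= 1, the quadratic production al (eta1 N1 + eta2 N2) N1 of
   N2 is outweighed by the loss ((eta1 + c1) N1 + (eta2 + c2) N2) N1 of N1, so
   the quadratic part of dV/dt is nonpositive.  The quadrant is invariant since
   the field is quasi-positive (F1(0, v) = bt v, F2(u, 0) = (k + eta1 u) u):
   the squared negative parts of a solution satisfy a linear Gronwall
   inequality and start from 0.  Hence V(t) <= exp(-g t) V(0). *)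

Lemma derivable_pt_lim_exp_scal a t :
  derivable_pt_lim (fun s => exp (a * s)) t (a * exp (a * t)).
Proof.
  assert (Hlin : derivable_pt_lim (mult_real_fct a id) t (a * 1))
    by apply derivable_pt_lim_scal, derivable_pt_lim_id.
  pose proof (derivable_pt_lim_comp _ exp t _ _ Hlin (derivable_pt_lim_exp _)) as H.
  unfold comp, mult_real_fct, id in H.
  replace (a * exp (a * t)) with (exp (a * t) * (a * 1)) by ring.
  exact H.
Qed.

Lemma continuity_pt_exp_scal a t : continuity_pt (fun s => exp (a * s)) t.
Proof.
  apply derivable_continuous_pt.
  exists (a * exp (a * t)); apply derivable_pt_lim_exp_scal.
Qed.

Lemma derivable_pt_lim_locally f g x l delta :
  0 < delta -> (forall y, Rabs (y - x) < delta -> f y = g y) ->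
  derivable_pt_lim g x l -> derivable_pt_lim f x l.
Proof.
  intros Hdelta Hfg Hg eps Heps.
  destruct (Hg eps Heps) as [dg Hdg].
  assert (Hpos : 0 < Rmin dg delta) by (apply Rmin_pos; [apply cond_pos | lra]).
  exists (mkposreal _ Hpos); simpl; intros h Hh0 Hh.
  pose proof (Rmin_l dg delta); pose proof (Rmin_r dg delta).
  rewrite (Hfg x), (Hfg (x + h)).
  - apply Hdg; [exact Hh0 | lra].
  - replace (x + h - x) with h by ring; lra.
  - rewrite Rminus_diag, Rabs_R0; lra.
Qed.

Lemma nonincreasing_of_derivative_nonpos f f' a b :
  a <= b ->
  (forall c, a <= c <= b -> continuity_pt f c) ->
  (forall c, a < c < b -> derivable_pt_lim f c (f' c)) ->
  (forall c, a < c < b -> f' c <= 0) ->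
  f b <= f a.
Proof.
  intros Hab Hcont Hder Hneg.
  destruct (Req_dec a b) as [<- | Hne]; [lra |].
  pose (prf := fun c (Hc : a < c < b) =>
    exist (fun l => derivable_pt_lim f c l) (f' c) (Hder c Hc)).
  pose (prid := fun c (_ : a < c < b) => derivable_pt_id c).
  destruct (MVT f id a b prf prid ltac:(lra) Hcont
              (fun c _ => derivable_continuous_pt _ _ (derivable_pt_id c)))
    as (c & Hc & Hmvt).
  unfold prf, prid in Hmvt; simpl in Hmvt.
  rewrite derive_pt_id in Hmvt; unfold id in Hmvt.
  pose proof (Hneg c Hc); nra.
Qed.

Lemma gronwall_exp f f' r t :
  0 <= t ->
  (forall s, 0 <= s <= t -> continuity_pt f s) ->
  (forall s, 0 < s < t -> derivable_pt_lim f s (f' s)) ->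
  (forall s, 0 < s < t -> f' s <= r * f s) ->
  f t * exp (- r * t) <= f 0.
Proof.
  intros Ht Hcont Hder Hle.
  pose proof (nonincreasing_of_derivative_nonpos
    (fun s => f s * exp (- r * s))
    (fun s => f' s * exp (- r * s) + f s * (- r * exp (- r * s))) 0 t Ht) as H.
  cbv beta in H; rewrite Rmult_0_r, exp_0, Rmult_1_r in H; apply H.
  - intros s Hs.
    apply continuity_pt_mult; [exact (Hcont s Hs) | apply continuity_pt_exp_scal].
  - intros s Hs.
    exact (derivable_pt_lim_mult f (fun s => exp (- r * s)) s _ _
             (Hder s Hs) (derivable_pt_lim_exp_scal _ _)).
  - intros s Hs.
    pose proof (Hle s Hs); pose proof (exp_pos (- r * s)); nra.
Qed.

Lemma continuity_bounded f a b :
  a <= b -> (forall c, a <= c <= b -> continuity_pt f c) ->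
  exists B, forall c, a <= c <= b -> Rabs (f c) <= B.
Proof.
  intros Hab Hcont.
  destruct (continuity_ab_maj f a b Hab Hcont) as (cM & HM & _).
  destruct (continuity_ab_min f a b Hab Hcont) as (cm & Hm & _).
  exists (Rmax (f cM) (- f cm)); intros c Hc.
  pose proof (HM c Hc); pose proof (Hm c Hc).
  pose proof (Rmax_l (f cM) (- f cm)); pose proof (Rmax_r (f cM) (- f cm)).
  apply Rabs_le; lra.
Qed.

Definition neg_sq (x : R) : R := Rmin x 0 ^ 2.

Lemma neg_sq_ge0 x : 0 <= neg_sq x.
Proof. apply pow2_ge_0. Qed.

Lemma neg_sq_of_nonneg x : 0 <= x -> neg_sq x = 0.
Proof. intros Hx; unfold neg_sq; rewrite Rmin_right by lra; ring. Qed.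

Lemma nonneg_of_neg_sq_le0 x : neg_sq x <= 0 -> 0 <= x.
Proof.
  unfold neg_sq; intros H.
  destruct (Rle_dec 0 x) as [Hx | Hx]; [exact Hx |].
  rewrite Rmin_left in H by lra; nra.
Qed.

Lemma derivable_pt_lim_neg_sq x : derivable_pt_lim neg_sq x (2 * Rmin x 0).
Proof.
  destruct (Rtotal_order x 0) as [Hx | [-> | Hx]].
  - rewrite Rmin_left by lra.
    apply (derivable_pt_lim_locally _ (fun y => y ^ 2) _ _ (- x)); [lra | |].
    + intros y Hy; unfold neg_sq; rewrite Rmin_left; [reflexivity |].
      apply Rabs_def2 in Hy; lra.
    + replace (2 * x) with (INR 2 * x ^ (2 - 1)) by (simpl; ring).
      apply derivable_pt_lim_pow.
  - rewrite Rmin_left by lra.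
    intros eps Heps; exists (mkposreal _ Heps); simpl; intros h Hh0 Hh.
    unfold neg_sq; rewrite Rplus_0_l, (Rmin_left 0 0) by lra.
    destruct (Rle_dec h 0).
    + rewrite Rmin_left by lra.
      replace ((h ^ 2 - 0 ^ 2) / h - 2 * 0) with h by (field; exact Hh0); exact Hh.
    + rewrite Rmin_right by lra.
      replace ((0 ^ 2 - 0 ^ 2) / h - 2 * 0) with 0 by (field; exact Hh0).
      rewrite Rabs_R0; exact Heps.
  - rewrite Rmin_right by lra.
    apply (derivable_pt_lim_locally _ (fun _ => 0) _ _ x); [lra | |].
    + intros y Hy; apply neg_sq_of_nonneg; apply Rabs_def2 in Hy; lra.
    + replace (2 * 0) with 0 by ring; apply derivable_pt_lim_const.
Qed.

Lemma continuity_pt_neg_sq x : continuity_pt neg_sq x.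
Proof.
  apply derivable_continuous_pt.
  exists (2 * Rmin x 0); apply derivable_pt_lim_neg_sq.
Qed.

Lemma Rmin0_mul_self x : Rmin x 0 * x = neg_sq x.
Proof.
  unfold neg_sq; destruct (Rle_dec x 0).
  - rewrite Rmin_left by lra; ring.
  - rewrite Rmin_right by lra; ring.
Qed.

Lemma Rmin0_mul_le x y : Rmin x 0 * y <= Rmin x 0 * Rmin y 0.
Proof.
  apply Rmult_le_compat_neg_l; [apply Rmin_r | apply Rmin_l].
Qed.

Lemma quasi_positive_le a e u v :
  0 <= a -> 0 <= e ->
  (a + e * u) * u * Rmin v 0 <= a * Rmin u 0 * Rmin v 0.
Proof.
  intros Ha He; pose proof (Rmin_r v 0).
  destruct (Rle_dec 0 u).
  - rewrite (Rmin_right u 0) by lra.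
    assert (0 <= (a + e * u) * u) by (apply Rmult_le_pos; nra).
    nra.
  - rewrite (Rmin_left u 0) by lra.
    assert (0 <= e * (u * u)) by (apply Rmult_le_pos; nra).
    nra.
Qed.

(* [is_solution] only gives continuity from the right at 0, whereas the mean
   value theorem needs continuity at the endpoints; [ext0 f] is constant on
   [t <= 0]. *)
Definition ext0 (f : R -> R) (t : R) : R := f (Rmax 0 t).

Lemma ext0_eq f t : 0 <= t -> ext0 f t = f t.
Proof. intros Ht; unfold ext0; rewrite Rmax_right by lra; reflexivity. Qed.

Lemma continuity_pt_ext0_0 (f : R -> R) :
  (forall eps, 0 < eps -> exists delta, 0 < delta /\
      forall t, 0 <= t < delta -> Rabs (f t - f 0) < eps) ->
  continuity_pt (ext0 f) 0.
Proof.
  intros Hf eps Heps.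
  destruct (Hf eps Heps) as (delta & Hdelta & Hclose).
  exists delta; split; [exact Hdelta |].
  intros x [_ Hx]; simpl in *; unfold R_dist, ext0 in *.
  rewrite (Rmax_left 0 0) by lra.
  destruct (Rle_dec x 0).
  - rewrite Rmax_left, Rminus_diag, Rabs_R0 by lra; exact Heps.
  - rewrite Rmax_right by lra; apply Hclose.
    rewrite Rminus_0_r, Rabs_right in Hx; lra.
Qed.

Lemma derivable_pt_lim_ext0 f t l :
  0 < t -> derivable_pt_lim f t l -> derivable_pt_lim (ext0 f) t l.
Proof.
  intros Ht; apply (derivable_pt_lim_locally _ _ _ _ t Ht).
  intros y Hy; apply ext0_eq; apply Rabs_def2 in Hy; lra.
Qed.

Lemma Rabs_lt_of_weighted_sum al eps x y :
  0 < al <= 1 -> 0 <= x -> 0 <= y -> x + al * y < al * eps ->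
  Rabs x < eps /\ Rabs y < eps.
Proof.
  intros Hal Hx Hy Hsum.
  rewrite !Rabs_right by lra.
  split; [nra |].
  apply (Rmult_lt_reg_l al); lra.
Qed.

Section Model.

Variables k d b bt eta1 eta2 c1 c2 ct1 ct2 : R.
Hypotheses (k_gt0 : 0 < k) (d_gt0 : 0 < d) (b_ge0 : 0 <= b) (bt_ge0 : 0 <= bt)
  (eta1_ge0 : 0 <= eta1) (eta2_ge0 : 0 <= eta2) (c1_ge0 : 0 <= c1) (c2_ge0 : 0 <= c2)
  (ct1_ge0 : 0 <= ct1) (ct2_ge0 : 0 <= ct2).

Local Notation f1 := (F1 k b bt eta1 eta2 c1 c2).
Local Notation f2 := (F2 k d eta1 eta2 ct1 ct2).

Lemma neg_sq_field_le B :
  exists M, forall u v, Rabs u <= B -> Rabs v <= B ->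
    2 * Rmin u 0 * f1 u v + 2 * Rmin v 0 * f2 u v <= M * (neg_sq u + neg_sq v).
Proof.
  exists (2 * (b + (eta1 + c1 + eta2 + c2 + ct1 + ct2 + eta2) * B) + bt + k).
  intros u v Hu Hv.
  assert (Hu' : - B <= u <= B) by (unfold Rabs in Hu; destruct (Rcase_abs u); lra).
  assert (Hv' : - B <= v <= B) by (unfold Rabs in Hv; destruct (Rcase_abs v); lra).
  set (mu := Rmin u 0); set (mv := Rmin v 0).
  assert (Hamgm : 2 * (mu * mv) <= neg_sq u + neg_sq v).
  { unfold neg_sq; fold mu mv; pose proof (pow2_ge_0 (mu - mv)); nra. }
  pose proof (Rmin0_mul_self u) as Hu2; pose proof (Rmin0_mul_self v) as Hv2.
  pose proof (Rmin0_mul_le u v) as Hmuv.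
  pose proof (quasi_positive_le k eta1 u v (Rlt_le _ _ k_gt0) eta1_ge0) as Hquasi.
  fold mu mv in Hu2, Hv2, Hmuv, Hquasi.
  assert (E : 2 * mu * f1 u v + 2 * mv * f2 u v
    = 2 * (b - k - (eta1 + c1) * u - (eta2 + c2) * v) * (mu * u) + 2 * bt * (mu * v)
      - 2 * (d + ct1 * u + ct2 * v) * (mv * v) + 2 * ((k + eta1 * u) * u * mv)
      + 2 * eta2 * u * (mv * v)) by (unfold F1, F2; ring).
  rewrite E, Hu2, Hv2.
  set (nu := neg_sq u) in *; set (nv := neg_sq v) in *.
  assert (nu_ge0 : 0 <= nu) by apply neg_sq_ge0.
  assert (nv_ge0 : 0 <= nv) by apply neg_sq_ge0.
  assert (HP : b - k - (eta1 + c1) * u - (eta2 + c2) * v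
               <= b + (eta1 + c1 + eta2 + c2) * B) by nra.
  assert (HQ : - (ct1 + ct2) * B <= d + ct1 * u + ct2 * v) by nra.
  pose proof (Rmult_le_compat_r nu _ _ nu_ge0 HP).
  pose proof (Rmult_le_compat_r nv _ _ nv_ge0 HQ).
  assert (bt * (2 * (mu * v)) <= bt * (nu + nv)) by (apply Rmult_le_compat_l; lra).
  assert (k * (2 * (mu * mv)) <= k * (nu + nv)) by (apply Rmult_le_compat_l; lra).
  assert (eta2 * nv * u <= eta2 * nv * B)
    by (apply Rmult_le_compat_l; [apply Rmult_le_pos |]; lra).
  assert (0 <= (ct1 + ct2 + eta2) * B * nu)
    by (apply Rmult_le_pos; [apply Rmult_le_pos |]; lra).
  assert (0 <= (b + (eta1 + c1 + eta2 + c2) * B) * nv)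
    by (apply Rmult_le_pos; [apply Rplus_le_le_0_compat; [| apply Rmult_le_pos] |]; lra).
  lra.
Qed.

Lemma lyapunov_le al g x y :
  0 <= al <= 1 -> 0 <= x -> 0 <= y ->
  b - k + al * k <= - g -> bt - al * d <= - g * al ->
  f1 x y + al * f2 x y <= - g * (x + al * y).
Proof.
  intros Hal Hx Hy Hlin1 Hlin2.
  assert (E : f1 x y + al * f2 x y + g * (x + al * y)
    = (b - k + al * k + g) * x + (bt - al * d + g * al) * y
      - ((1 - al) * eta1 + c1) * (x * x)
      - ((1 - al) * eta2 + c2 + al * ct1) * (x * y)
      - al * ct2 * (y * y)) by (unfold F1, F2; ring).
  assert (0 <= ((1 - al) * eta1 + c1) * (x * x)) by (apply Rmult_le_pos; nra).
  assert (0 <= ((1 - al) * eta2 + c2 + al * ct1) * (x * y)) by (apply Rmult_le_pos; nra).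
  assert (0 <= al * ct2 * (y * y)) by (apply Rmult_le_pos; nra).
  assert ((b - k + al * k + g) * x <= 0) by nra.
  assert ((bt - al * d + g * al) * y <= 0) by nra.
  lra.
Qed.

Lemma lyapunov_rate :
  b / k + bt / d < 1 ->
  exists al g, 0 < al <= 1 /\ 0 < g /\
    forall x y, 0 <= x -> 0 <= y -> f1 x y + al * f2 x y <= - g * (x + al * y).
Proof.
  intros Hstab.
  set (p := b / k) in *; set (q := bt / d) in *.
  assert (Hp : 0 <= p) by (apply Rle_mult_inv_pos; lra).
  assert (Hq : 0 <= q) by (apply Rle_mult_inv_pos; lra).
  set (m := Rmin k d).
  assert (Hmk : m <= k) by apply Rmin_l.
  assert (Hmd : m <= d) by apply Rmin_r.
  assert (Hm : 0 < m) by (apply Rmin_pos; lra).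
  exists ((1 - p + q) / 2), ((1 - p - q) * m / 2).
  split; [lra |]; split; [nra |].
  intros x y Hx Hy; apply lyapunov_le; [lra | exact Hx | exact Hy | |].
  - replace b with (p * k) by (unfold p; field; lra).
    pose proof (Rmult_le_compat_l (1 - p - q) m k ltac:(lra) ltac:(lra)); lra.
  - replace bt with (q * d) by (unfold q; field; lra).
    assert (Hmal : m * ((1 - p + q) / 2) <= d) by nra.
    pose proof (Rmult_le_compat_l (1 - p - q) _ _ ltac:(lra) Hmal); lra.
Qed.

Definition solves_on (u v : R -> R) (t : R) : Prop :=
  (forall s, 0 <= s <= t -> continuity_pt u s /\ continuity_pt v s) /\
  (forall s, 0 < s < t ->
     derivable_pt_lim u s (f1 (u s) (v s)) /\ derivable_pt_lim v s (f2 (u s) (v s))).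

Lemma is_solution_ext0 N1 N2 t :
  is_solution k d b bt eta1 eta2 c1 c2 ct1 ct2 N1 N2 -> solves_on (ext0 N1) (ext0 N2) t.
Proof.
  intros [Hright Hder].
  assert (Hder' : forall s, 0 < s ->
    derivable_pt_lim (ext0 N1) s (f1 (ext0 N1 s) (ext0 N2 s)) /\
    derivable_pt_lim (ext0 N2) s (f2 (ext0 N1 s) (ext0 N2 s))).
  { intros s Hs; rewrite !ext0_eq by lra.
    destruct (Hder s Hs); split; apply derivable_pt_lim_ext0; assumption. }
  split; [| intros s Hs; apply Hder'; lra].
  intros s Hs; destruct (Req_dec s 0) as [-> | Hs0].
  - split; apply continuity_pt_ext0_0; intros eps Heps;
      destruct (Hright eps Heps) as (delta & Hdelta & Hclose);
      exists delta; (split; [exact Hdelta | intros; apply Hclose; assumption]).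
  - destruct (Hder' s ltac:(lra)).
    split; apply derivable_continuous_pt; eexists; eassumption.
Qed.

Lemma solves_on_nonneg u v t :
  0 <= t -> solves_on u v t -> 0 <= u 0 -> 0 <= v 0 -> 0 <= u t /\ 0 <= v t.
Proof.
  intros Ht [Hcont Hder] Hu0 Hv0.
  destruct (continuity_bounded u 0 t Ht (fun s Hs => proj1 (Hcont s Hs))) as [Bu Hbu].
  destruct (continuity_bounded v 0 t Ht (fun s Hs => proj2 (Hcont s Hs))) as [Bv Hbv].
  destruct (neg_sq_field_le (Rmax Bu Bv)) as [M HM].
  pose proof (gronwall_exp (fun s => neg_sq (u s) + neg_sq (v s))
    (fun s => 2 * Rmin (u s) 0 * f1 (u s) (v s) + 2 * Rmin (v s) 0 * f2 (u s) (v s))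
    M t Ht) as Hgron.
  cbv beta in Hgron.
  rewrite (neg_sq_of_nonneg (u 0)), (neg_sq_of_nonneg (v 0)), Rplus_0_r in Hgron
    by assumption.
  assert (Hdecay : (neg_sq (u t) + neg_sq (v t)) * exp (- M * t) <= 0).
  { apply Hgron.
    - intros s Hs; destruct (Hcont s Hs).
      apply continuity_pt_plus; apply (continuity_pt_comp _ neg_sq);
        auto using continuity_pt_neg_sq.
    - intros s Hs; destruct (Hder s Hs) as [Hu Hv].
      apply (derivable_pt_lim_plus (fun s => neg_sq (u s)) (fun s => neg_sq (v s)));
        [apply (derivable_pt_lim_comp u neg_sq) | apply (derivable_pt_lim_comp v neg_sq)];
        auto using derivable_pt_lim_neg_sq.
    - intros s Hs; apply HM.
      + apply (Rle_trans _ Bu); [apply Hbu; lra | apply Rmax_l].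
      + apply (Rle_trans _ Bv); [apply Hbv; lra | apply Rmax_r]. }
  pose proof (exp_pos (- M * t)); pose proof (neg_sq_ge0 (u t)); pose proof (neg_sq_ge0 (v t)).
  assert (neg_sq (u t) + neg_sq (v t) <= 0) by nra.
  split; apply nonneg_of_neg_sq_le0; lra.
Qed.

Lemma is_solution_nonneg N1 N2 :
  is_solution k d b bt eta1 eta2 c1 c2 ct1 ct2 N1 N2 -> 0 <= N1 0 -> 0 <= N2 0 ->
  forall t, 0 <= t -> 0 <= N1 t /\ 0 <= N2 t.
Proof.
  intros Hsol H10 H20 t Ht.
  rewrite <- (ext0_eq N1 t), <- (ext0_eq N2 t) by exact Ht.
  apply solves_on_nonneg; [exact Ht | apply is_solution_ext0, Hsol | |];
    rewrite ext0_eq by lra; assumption.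
Qed.

Section Lyapunov.

Variables al g : R.
Hypotheses (al_pos : 0 < al) (al_le1 : al <= 1) (g_gt0 : 0 < g)
  (lyapunov : forall x y, 0 <= x -> 0 <= y -> f1 x y + al * f2 x y <= - g * (x + al * y)).

Lemma equilibrium_unique x y :
  0 <= x -> 0 <= y -> f1 x y = 0 -> f2 x y = 0 -> x = 0 /\ y = 0.
Proof.
  intros Hx Hy E1 E2.
  pose proof (lyapunov x y Hx Hy) as H; rewrite E1, E2 in H.
  assert (x + al * y <= 0) by nra.
  split; nra.
Qed.

Lemma is_solution_lyapunov_decay N1 N2 t :
  is_solution k d b bt eta1 eta2 c1 c2 ct1 ct2 N1 N2 -> 0 <= N1 0 -> 0 <= N2 0 -> 0 <= t ->
  (N1 t + al * N2 t) * exp (g * t) <= N1 0 + al * N2 0.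
Proof.
  intros Hsol H10 H20 Ht.
  destruct (is_solution_ext0 N1 N2 t Hsol) as [Hcont Hder].
  set (u := ext0 N1) in *; set (v := ext0 N2) in *.
  assert (Hpos : forall s, 0 <= s -> 0 <= u s /\ 0 <= v s).
  { intros s Hs; unfold u, v; rewrite !ext0_eq by exact Hs.
    apply (is_solution_nonneg N1 N2); assumption. }
  pose proof (gronwall_exp (fun s => u s + al * v s)
    (fun s => f1 (u s) (v s) + al * f2 (u s) (v s)) (- g) t Ht) as Hgron.
  cbv beta in Hgron; rewrite Ropp_involutive in Hgron.
  unfold u, v in Hgron; rewrite !ext0_eq in Hgron by lra.
  apply Hgron.
  - intros s Hs; destruct (Hcont s Hs).
    apply continuity_pt_plus; [| apply continuity_pt_scal]; assumption.
  - intros s Hs; destruct (Hder s Hs).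
    apply (derivable_pt_lim_plus u (fun s => al * v s));
      [| apply (derivable_pt_lim_scal v)]; assumption.
  - intros s Hs; destruct (Hpos s ltac:(lra)).
    apply lyapunov; assumption.
Qed.

Lemma zero_stable eps :
  0 < eps -> exists delta, 0 < delta /\
    forall N1 N2, is_solution k d b bt eta1 eta2 c1 c2 ct1 ct2 N1 N2 ->
      0 <= N1 0 -> 0 <= N2 0 -> N1 0 < delta -> N2 0 < delta ->
      forall t, 0 <= t -> Rabs (N1 t) < eps /\ Rabs (N2 t) < eps.
Proof.
  intros Heps; exists (eps * al / 2); split; [nra |].
  intros N1 N2 Hsol H10 H20 H1d H2d t Ht.
  pose proof (is_solution_lyapunov_decay N1 N2 t Hsol H10 H20 Ht) as Hdecay.
  destruct (is_solution_nonneg N1 N2 Hsol H10 H20 t Ht).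
  assert (Hexp : 1 <= exp (g * t)) by (pose proof (exp_ineq1_le (g * t)); nra).
  assert (Hal2 : al * N2 0 <= eps * al / 2).
  { apply (Rle_trans _ (1 * N2 0)); [apply Rmult_le_compat_r |]; lra. }
  apply (Rabs_lt_of_weighted_sum al); [lra | assumption | assumption |].
  assert (0 <= N1 t + al * N2 t) by nra.
  assert (N1 t + al * N2 t <= (N1 t + al * N2 t) * exp (g * t)) by nra.
  lra.
Qed.

Lemma zero_attractive N1 N2 :
  is_solution k d b bt eta1 eta2 c1 c2 ct1 ct2 N1 N2 -> 0 <= N1 0 -> 0 <= N2 0 ->
  forall eps, 0 < eps -> exists T,
    forall t, T <= t -> Rabs (N1 t) < eps /\ Rabs (N2 t) < eps.
Proof.
  intros Hsol H10 H20 eps Heps.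
  set (V0 := N1 0 + al * N2 0); set (r := g * (al * eps)).
  assert (Hr : 0 < r) by (unfold r; apply Rmult_lt_0_compat; nra).
  assert (HV0 : 0 <= V0) by (unfold V0; nra).
  exists (V0 / r); intros t Ht.
  assert (Ht0 : 0 <= t) by (pose proof (Rle_mult_inv_pos V0 r HV0 Hr); unfold Rdiv in Ht; lra).
  assert (HrT : V0 <= r * t).
  { apply (Rmult_le_compat_l r) in Ht; [| lra].
    replace (r * (V0 / r)) with V0 in Ht by (field; lra); exact Ht. }
  pose proof (is_solution_lyapunov_decay N1 N2 t Hsol H10 H20 Ht0) as Hdecay.
  destruct (is_solution_nonneg N1 N2 Hsol H10 H20 t Ht0).
  fold V0 in Hdecay; set (Vt := N1 t + al * N2 t) in *.
  assert (HVt : 0 <= Vt) by (unfold Vt; nra).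
  assert (Hgrowth : Vt * (1 + g * t) <= V0).
  { pose proof (exp_ineq1_le (g * t)).
    apply (Rle_trans _ (Vt * exp (g * t))); [apply Rmult_le_compat_l |]; lra. }
  apply (Rabs_lt_of_weighted_sum al); [lra | assumption | assumption |].
  fold Vt; destruct (Rlt_le_dec Vt (al * eps)) as [| Hbig]; [assumption |].
  assert (al * eps * (g * t) <= Vt * (g * t)) by (apply Rmult_le_compat_r; nra).
  unfold r in HrT; nra.
Qed.

End Lyapunov.

End Model.

Theorem theorem6 :
  forall k d b eta1 eta2 c1 c2 ct1 ct2 : R,
    0 < k -> 0 < d -> 0 <= b ->
    0 <= eta1 -> 0 <= eta2 -> 0 <= c1 -> 0 <= c2 -> 0 <= ct1 -> 0 <= ct2 ->
    0 < eta1 + c1 -> 0 < ct2 ->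
    exists bt0 : R, 0 < bt0 /\
    forall bt : R, 0 <= bt -> bt < bt0 -> b / k + bt / d < 1 ->
      (* (0,0) is a steady state *)
      (F1 k b bt eta1 eta2 c1 c2 0 0 = 0 /\ F2 k d eta1 eta2 ct1 ct2 0 0 = 0) /\
      (* it is the unique steady state in R_+^2 *)
      (forall x y : R, 0 <= x -> 0 <= y ->
         F1 k b bt eta1 eta2 c1 c2 x y = 0 -> F2 k d eta1 eta2 ct1 ct2 x y = 0 ->
         x = 0 /\ y = 0) /\
      (* it is (Lyapunov) stable for nonnegative initial data *)
      (forall eps : R, 0 < eps -> exists delta : R, 0 < delta /\
         forall N1 N2 : R -> R,
           is_solution k d b bt eta1 eta2 c1 c2 ct1 ct2 N1 N2 ->
           0 <= N1 0 -> 0 <= N2 0 -> N1 0 < delta -> N2 0 < delta ->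
           forall t : R, 0 <= t -> Rabs (N1 t) < eps /\ Rabs (N2 t) < eps) /\
      (* every trajectory with nonnegative initial data converges to (0,0) *)
      (forall N1 N2 : R -> R,
         is_solution k d b bt eta1 eta2 c1 c2 ct1 ct2 N1 N2 ->
         0 <= N1 0 -> 0 <= N2 0 ->
         forall eps : R, 0 < eps -> exists T : R,
           forall t : R, T <= t -> Rabs (N1 t) < eps /\ Rabs (N2 t) < eps).
Proof.
  intros k d b eta1 eta2 c1 c2 ct1 ct2 Hk Hd Hb He1 He2 Hc1 Hc2 Hct1 Hct2 _ _.
  (* Any bt0 works: b / k + bt / d < 1 alone suffices. *)
  exists 1; split; [lra |].
  intros bt Hbt _ Hstab.
  destruct (lyapunov_rate k d b bt eta1 eta2 c1 c2 ct1 ct2)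
    as (al & g & [Hal Hal1] & Hg & Hlyap); try assumption.
  split; [| split; [| split]].
  - unfold F1, F2; split; ring.
  - exact (equilibrium_unique k d b bt eta1 eta2 c1 c2 ct1 ct2 al g Hal Hg Hlyap).
  - eapply zero_stable with (al := al) (g := g); eassumption.
  - eapply zero_attractive with (al := al) (g := g); eassumption.
Qed.
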